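(* Let $x\in\mathbb{R}^{n}$ with $x\ge0$ entrywise, $x\ne0$, and $\mathbf{1}^{T}x\le\|x\|^{2}$. Then $\mathbf{1}^{T}\left(I-xx^{T}/\|x\|^{2}\right)\mathbf{1}\ge\|(\mathbf{1}-x)_{+}\|^{2}$.
   Context: $\mathbf{1}$ is the all-ones vector in $\mathbb{R}^{n}$ and $(v)_{+}=\max\{0,v\}$ entrywise. *)

From mathcomp Require Import all_boot all_order all_algebra.
Set Implicit Arguments. Unset Strict Implicit. Unset Printing Implicit Defensive.
Import Order.TTheory GRing.Theory Num.Theory.
Local Open Scope ring_scope.

Definition ones (R : realFieldType) (n : nat) : 'cV[R]_n := const_mx 1.
Definition sqnorm (R : realFieldType) (n : nat) (x : 'cV[R]_n) : R := (x^T *m x) 0 0.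
Definition pos_part (R : realFieldType) (n : nat) (v : 'cV[R]_n) : 'cV[R]_n :=
  map_mx (fun a => Num.max 0 a) v.

From mathcomp Require Import all_boot all_order all_algebra.
From mathcomp Require Import ring lra.
Import Order.TTheory GRing.Theory Num.Theory.
Local Open Scope ring_scope.

(* The left-hand side is the squared distance from 1 to its orthogonal
   projection onto the line through x, i.e. ||1 - t x||^2 with t = 1^T x / ||x||^2.
   The hypotheses give 0 <= t <= 1, and for such t and x_i >= 0 each entry
   satisfies (1 - t x_i)^2 >= ((1 - x_i)_+)^2. *)

Lemma max0_1B_sqr_le (R : realDomainType) (a t : R) :
  0 <= a -> 0 <= t <= 1 -> Num.max 0 (1 - a) ^+ 2 <= (1 - t * a) ^+ 2.
Proof.
move=> a_ge0 /andP[t_ge0 t_le1]; have [a_ge1 | a_lt1] := lerP 1 a.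
  by rewrite max_l ?subr_le0 // expr0n sqr_ge0.
have ta_le_a : t * a <= a by rewrite ler_piMl.
rewrite max_r ?subr_ge0 ?(ltW a_lt1) // ler_sqr ?nnegrE; lra.
Qed.

Section ColumnVectors.

Context {R : realFieldType} {n : nat}.
Implicit Types (u v x y : 'cV[R]_n).

Lemma trmx_mul_entryC u v : (u^T *m v) 0 0 = (v^T *m u) 0 0.
Proof. by rewrite -(trmxK (v^T *m u)) trmx_mul trmxK [RHS]mxE. Qed.

Lemma sqnormE u : sqnorm u = \sum_i u i 0 ^+ 2.
Proof. by rewrite /sqnorm mxE; apply: eq_bigr => i _; rewrite mxE expr2. Qed.

Lemma sqnorm_gt0 u : u != 0 -> 0 < sqnorm u.
Proof.
move=> u_neq0; have [i ui_neq0] : exists i, u i 0 != 0.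
  apply/existsP; apply: contraR u_neq0; rewrite negb_exists => /forallP ui_eq0.
  by apply/eqP/matrixP => i j; rewrite ord1 mxE; apply/eqP/negbNE.
rewrite sqnormE (bigD1 i) //= ltr_wpDr ?sumr_ge0 // => [j _|].
  exact: sqr_ge0.
by rewrite exprn_even_gt0.
Qed.

Lemma ler_sqnorm u v :
  (forall i, u i 0 ^+ 2 <= v i 0 ^+ 2) -> sqnorm u <= sqnorm v.
Proof. by move=> le_uv; rewrite !sqnormE; apply: ler_sum => i _; exact: le_uv. Qed.

Lemma sqnorm_proj_compl x y : sqnorm x != 0 ->
  (y^T *m (1%:M - (sqnorm x)^-1 *: (x *m x^T)) *m y) 0 0
    = sqnorm (y - ((x^T *m y) 0 0 / sqnorm x) *: x).
Proof.
rewrite /sqnorm => q_neq0.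
rewrite [(y - _)^T]linearB /= [(_ *: x)^T]linearZ /=.
rewrite mulmxBl !mulmxBr mulmx1 mulmxBl -!scalemxAr !mulmxA -!scalemxAl -(mulmxA (y^T *m x)).
rewrite [y^T *m x]mx11_scalar [x^T *m y]mx11_scalar.
rewrite [x^T *m x]mx11_scalar [y^T *m y]mx11_scalar [(y^T *m x) 0 0]trmx_mul_entryC.
(* Naming the inner products keeps mxE from unfolding them into sums. *)
set q := (x^T *m x) 0 0; set s := (x^T *m y) 0 0; set r := (y^T *m y) 0 0.
by rewrite mul_scalar_mx !mxE eqxx !mulr1n; field.
Qed.

End ColumnVectors.

Theorem lemma20 (R : realFieldType) (n : nat) (x : 'cV[R]_n) :
  (forall i, 0 <= x i 0) ->
  x != 0 ->
  ((ones R n)^T *m x) 0 0 <= sqnorm x ->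
  ((ones R n)^T *m (1%:M - (sqnorm x)^-1 *: (x *m x^T)) *m ones R n) 0 0
    >= sqnorm (pos_part (ones R n - x)).
Proof.
move=> x_ge0 x_neq0 s_le_q.
have q_gt0 : 0 < sqnorm x by exact: sqnorm_gt0.
rewrite sqnorm_proj_compl ?gt_eqF // -trmx_mul_entryC.
set s := ((ones R n)^T *m x) 0 0 in s_le_q *.
have s_ge0 : 0 <= s by rewrite /s mxE; apply: sumr_ge0 => i _; rewrite !mxE mul1r.
apply: ler_sqnorm => i; rewrite !mxE; apply: max0_1B_sqr_le => //.
by rewrite divr_ge0 ?(ltW q_gt0) // ler_pdivrMr // mul1r.
Qed.
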